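(* Let $\alpha\approx1.46557$ be the real root of $x^3-x^2-1$ between $1$ and $2$. Every graph of pathwidth at most $1$ and order $n$ has at most $\alpha^n$ 1-minimal perfect dominating sets. Moreover, the number of 1-minimal perfect dominating sets of the path on $n$ vertices is $\Theta(\alpha^n)$.
   Context: A perfect dominating set of $G=(V,E)$ is a set $D\subseteq V$ such that every vertex of $V\setminus D$ has exactly one neighbour in $D$ (no condition on vertices of $D$); i.e. an $(\mathbb{N},\{1\})$-dominating set. It is 1-minimal if for every $x\in D$, $D\setminus\{x\}$ is not a perfect dominating set. Order = number of vertices; pathwidth is the standard notion. *)

From mathcomp Require Import all_boot.
Set Implicit Arguments. Unset Strict Implicit. Unset Printing Implicit Defensive.

(* A finite simple graph on vertex type T is a symmetric irreflexive relation
   e : rel T; the order of the graph is #|T|. *)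

Definition perfect_dom (T : finType) (e : rel T) (D : {set T}) : bool :=
  [forall v, (v \notin D) ==> (#|[set u in D | e v u]| == 1)].

Definition one_minimal_pds (T : finType) (e : rel T) (D : {set T}) : bool :=
  perfect_dom e D && [forall x in D, ~~ perfect_dom e (D :\ x)].

Definition num_1min_pds (T : finType) (e : rel T) : nat :=
  #|[set D : {set T} | one_minimal_pds e D]|.

Definition path_decomposition (T : finType) (e : rel T) (bags : seq {set T}) : Prop :=
  (forall v : T, exists2 X, X \in bags & v \in X) /\
  (forall u v : T, e u v -> exists2 X, X \in bags & (u \in X) && (v \in X)) /\
  (forall (v : T) (i j k : nat), i <= j <= k ->
      v \in nth set0 bags i -> v \in nth set0 bags k -> v \in nth set0 bags j).

Definition pathwidth_le1 (T : finType) (e : rel T) : Prop :=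
  exists bags : seq {set T}, path_decomposition e bags /\ all (fun X : {set T} => #|X| <= 2) bags.

Definition path_rel (n : nat) : rel 'I_n :=
  fun i j => (i.+1 == j :> nat) || (j.+1 == i :> nat).
Arguments path_rel n : clear implicits.

From mathcomp Require Import all_boot zify.
From Stdlib Require Import Reals Lra.
Set Implicit Arguments. Unset Strict Implicit. Unset Printing Implicit Defensive.

(* Count, more generally, the sets [D] that are 1-minimal perfect dominating
   sets of an induced subgraph G[S].  A path decomposition of width 1 always
   provides a vertex v of S that is isolated, or a leaf whose neighbour u has
   at most one non-leaf neighbour.  According to the neighbourhood of u this
   gives f(S) <= f(S - v), f(S) <= 2 f(S - v - u) or
   f(S) <= f(S - v) + f(S - v - u - p), and since alpha^3 = alpha^2 + 1 and
   alpha^2 >= 2 each of these propagates f(S) <= alpha^|S|.  On the path the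
   last inequality also holds reversed, f(P_m) >= f(P_(m-1)) + f(P_(m-3)),
   which gives the matching lower bound. *)

Lemma card_set_split (X : finType) (P c : pred X) :
  #|[set D | P D]| = #|[set D | P D && c D]| + #|[set D | P D && ~~ c D]|.
Proof.
rewrite -(cardsID [set D | c D] [set D | P D]); congr addn;
  by apply: eq_card => D; rewrite !inE andbC.
Qed.

Lemma card_set_le_inj (X Y : finType) (P : pred X) (Q : pred Y) (g : X -> Y) :
  (forall D, P D -> Q (g D)) -> {in P &, injective g} ->
  #|[set D | P D]| <= #|[set D | Q D]|.
Proof.
move=> PQ g_inj; rewrite -(card_in_imset (f := g)); last first.
  by move=> x y; rewrite !inE; apply: g_inj.
apply/subset_leq_card/subsetP => y /imsetP [x]; rewrite !inE => Px ->.
exact: PQ.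
Qed.

Section FinsetFacts.
Variable X : finType.
Implicit Types (A D : {set X}) (a b u : X).

Lemma cards1I u D : #|[set u] :&: D| = (u \in D).
Proof.
case: (boolP (u \in D)) => uD; first by rewrite (setIidPl _) ?cards1 ?sub1set.
by rewrite disjoint_setI0 ?cards0 ?disjoints1.
Qed.

Lemma setD1_notin A u : u \notin A -> A :\ u = A.
Proof. by move=> uA; apply/setDidPl; rewrite disjoint_sym disjoints1. Qed.

Lemma setD1I_notin A D u : u \notin D -> (A :\ u) :&: D = A :&: D.
Proof.
by move=> uD; apply/setP => y; rewrite !inE; case: (eqVneq y u) => [->|//];
  rewrite (negbTE uD) !andbF.
Qed.

Lemma setID1_notin A D u : u \notin A -> A :&: (D :\ u) = A :&: D.
Proof.
by move=> uA; apply/setP => y; rewrite !inE; case: (eqVneq y u) => [->|//];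
  rewrite (negbTE uA) ?andbF.
Qed.

Lemma setIU1_notin A D u : u \notin A -> A :&: (u |: D) = A :&: D.
Proof.
by move=> uA; apply/setP => y; rewrite !inE; case: (eqVneq y u) => [->|//];
  rewrite (negbTE uA) ?andbF.
Qed.

Lemma card_gt1_of a b A : a \in A -> b \in A -> a != b -> 1 < #|A|.
Proof. by move=> aA bA ab; apply/card_gt1P; exists a, b. Qed.

Lemma card1_set1 a A : a \in A -> #|A| = 1 -> A = [set a].
Proof. by move=> aA /eqP/cards1P [b Ab]; move: aA; rewrite Ab inE => /eqP ->. Qed.

Lemma setD1_inj u A D : u \in A -> u \in D -> A :\ u = D :\ u -> A = D.
Proof. by move=> uA uD; rewrite -{2}(setD1K uA) -{2}(setD1K uD) => ->. Qed.

Lemma setI_set2_notin a b D : a \in D -> b \notin D -> [set a; b] :&: D = [set a].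
Proof.
move=> aD bD; apply/setP => y; rewrite !inE.
by case: (eqVneq y a) => [->|_] /=; [rewrite aD | case: eqP => // ->; rewrite (negbTE bD)].
Qed.

Lemma cardsD1_in A u : u \in A -> #|A| = #|A :\ u|.+1.
Proof. by move=> uA; rewrite (cardsD1 u) uA. Qed.

End FinsetFacts.

(** * 1-minimal perfect dominating sets of induced subgraphs *)

Section InducedMinimalPDS.
Variables (T : finType) (e : rel T).
Hypotheses (e_sym : symmetric e) (e_irr : irreflexive e).
Implicit Types (S D : {set T}) (x y : T).

Definition nbr S x := [set y in S | e x y].

(* [mpds S D]: D is a 1-minimal perfect dominating set of the induced subgraph
   G[S]; a vertex x of D can be dropped exactly when x is a leaf whose
   neighbour lies in D. *)
Definition mpds S D := (D \subset S) && [forall x in S,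
  if x \in D then (#|nbr S x| == 1) ==> (nbr S x :&: D == set0)
  else #|nbr S x :&: D| == 1].

Definition mpds_count S := #|[set D | mpds S D]|.

Lemma in_nbr S x y : (y \in nbr S x) = (y \in S) && e x y.
Proof. by rewrite inE. Qed.

Lemma nbr_setD1 S v x : nbr (S :\ v) x = nbr S x :\ v.
Proof. by apply/setP => y; rewrite !inE; case: (y == v); rewrite ?andbF. Qed.

Lemma nbr_sym S x y : x \in S -> y \in nbr S x -> x \in nbr S y.
Proof. by move=> xS; rewrite !in_nbr => /andP [_ exy]; rewrite xS e_sym. Qed.

Lemma edge_neq x y : e x y -> x != y.
Proof. by apply: contraTneq => ->; rewrite e_irr. Qed.

Lemma nbr_neq S x y : y \in nbr S x -> x != y.
Proof. by rewrite in_nbr => /andP [_ /edge_neq]. Qed.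

Lemma nbr_sub S x y : y \in nbr S x -> y \in S.
Proof. by rewrite in_nbr => /andP []. Qed.

Lemma nbr_setIS S D x : nbr S x :&: (D :&: S) = nbr S x :&: D.
Proof. by apply/setP => y; rewrite !inE; case: (y \in S); rewrite ?andbT ?andbF. Qed.

Lemma notin_nbr_of_set1 S v u x :
  x \in S -> nbr S v = [set u] -> x != u -> v \notin nbr S x.
Proof. by move=> xS Nv xu; apply/negP => /(nbr_sym xS); rewrite Nv inE (negbTE xu). Qed.

Lemma mpds_sub S D : mpds S D -> D \subset S.
Proof. by case/andP. Qed.

Lemma mpds_dom S D x :
  mpds S D -> x \in S -> x \notin D -> #|nbr S x :&: D| = 1.
Proof.
case/andP => _ /forall_inP/(_ x) D_x xS /negbTE xD.
by move: (D_x xS); rewrite xD => /eqP.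
Qed.

Lemma mpds_leaf S D x :
  mpds S D -> x \in D -> #|nbr S x| = 1 -> nbr S x :&: D = set0.
Proof.
case/andP => sDS /forall_inP/(_ x) D_x xD x1.
by move: (D_x (subsetP sDS x xD)); rewrite xD x1 eqxx => /eqP.
Qed.

Lemma mpdsI S D : D \subset S ->
  (forall x, x \in S -> x \notin D -> #|nbr S x :&: D| = 1) ->
  (forall x, x \in D -> #|nbr S x| = 1 -> nbr S x :&: D = set0) -> mpds S D.
Proof.
move=> sDS dom leaf; apply/andP; split => //; apply/forall_inP => x xS.
by case: ifPn => xD; [apply/implyP => /eqP x1; rewrite leaf | rewrite dom].
Qed.

Lemma mpds_notin S D x : mpds S D -> x \notin S -> x \notin D.
Proof. by move=> /mpds_sub sDS; apply: contra; apply: (subsetP sDS). Qed.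

Lemma mpds_count_set0 : mpds_count set0 <= 1.
Proof.
rewrite /mpds_count -(cards1 (@set0 T)); apply/subset_leq_card/subsetP => D.
by rewrite !inE => /mpds_sub; rewrite subset0.
Qed.

Local Notation N := (nbr setT).

Lemma perfect_domE D :
  perfect_dom e D = [forall v, (v \notin D) ==> (#|N v :&: D| == 1)].
Proof.
apply: eq_forallb => v.
by have -> : [set u in D | e v u] = N v :&: D by apply/setP => y; rewrite !inE andbC.
Qed.

Lemma perfect_dom_setD1 D x : perfect_dom e D -> x \in D ->
  perfect_dom e (D :\ x) = (#|N x| == 1) && (N x :&: D != set0).
Proof.
have xNx : x \notin N x by rewrite in_nbr e_irr andbF.
rewrite !perfect_domE => /forallP domD xD; apply/idP/idP.
  move/forallP => domDx.
  have Nx_sub : N x \subset D.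
    apply/subsetP => w wN; apply/negPn/negP => wD.
    have xw : x \in N w :&: D by rewrite in_setI xD (nbr_sym _ wN) ?inE.
    have Nw : N w :&: D = [set x] by apply: card1_set1 xw (eqP (implyP (domD w) wD)).
    move: (implyP (domDx w)); rewrite in_setD1 (negbTE wD) andbF => /(_ isT).
    have -> : N w :&: (D :\ x) = N w :&: D :\ x by rewrite setIDA.
    by rewrite Nw setDv cards0.
  move: (implyP (domDx x)); rewrite setD11 setID1_notin // (setIidPl Nx_sub).
  by move=> /(_ isT) Nx1; rewrite Nx1 -card_gt0 (eqP Nx1).
case/andP => /eqP Nx1 /set0Pn [y]; rewrite in_setI => /andP [yN yD].
have Nx : N x = [set y] := card1_set1 yN Nx1.
apply/forallP => v; apply/implyP; rewrite in_setD1 negb_and negbK.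
case: (eqVneq v x) => [->|vx] /= vD.
  by rewrite Nx cards1I in_setD1 yD andbT (eq_sym y) (nbr_neq yN).
rewrite setID1_notin; first exact: (implyP (domD v) vD).
apply: contra vD => /(nbr_sym (in_setT v)).
by rewrite Nx inE => /eqP ->.
Qed.

Lemma one_minimal_pdsE D : one_minimal_pds e D = mpds setT D.
Proof.
rewrite /one_minimal_pds /mpds subsetT /=.
case: (boolP (perfect_dom e D)) => domD /=; last first.
  apply/esym/negbTE; apply: contra domD => /forall_inP D_x.
  rewrite perfect_domE; apply/forallP => v; apply/implyP => vD.
  by move: (D_x v (in_setT v)); rewrite (negbTE vD).
apply: eq_forallb => x; rewrite in_setT /=.
case: (boolP (x \in D)) => xD /=.
  by rewrite perfect_dom_setD1 // negb_and negbK; case: (_ == 1).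
by move: domD; rewrite perfect_domE => /forallP/(_ x); rewrite xD.
Qed.

Lemma num_1min_pdsE : num_1min_pds e = mpds_count setT.
Proof. by apply: eq_card => D; rewrite !inE one_minimal_pdsE. Qed.

End InducedMinimalPDS.

(** * Graphs of pathwidth at most one *)

Section PathwidthOne.
Variables (T : finType) (e : rel T).
Hypothesis e_irr : irreflexive e.
Variable bags : seq {set T}.
Hypothesis pd : path_decomposition e bags.
Hypothesis bags_small : all (fun X : {set T} => #|X| <= 2) bags.
Implicit Types (S : {set T}) (x y : T).

Local Notation B j := (nth set0 bags j).
Local Notation nbr := (nbr e).

Lemma bag_index_lt j x : x \in B j -> j < size bags.
Proof. by case: (ltnP j (size bags)) => // j_big; rewrite nth_default ?inE. Qed.

Lemma bag_no_three a b c j : a \in B j -> b \in B j -> c \in B j ->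
  a != b -> b != c -> a != c -> False.
Proof.
move=> aj bj cj ab bc ac.
have Bj2 : #|B j| <= 2 by apply: (allP bags_small); apply/mem_nth/(bag_index_lt aj).
have : a |: (b |: [set c]) \subset B j.
  by apply/subsetP => x; rewrite !inE => /or3P [] /eqP ->.
move/subset_leq_card/leq_trans/(_ Bj2).
by rewrite !cardsU1 cards1 !inE negb_or ab ac bc.
Qed.

Lemma bag_of_vertex x : exists j, x \in B j.
Proof.
case: pd => [cover _]; case: (cover x) => X Xbags xX.
by exists (index X bags); rewrite nth_index.
Qed.

Lemma bag_of_edge x y : e x y -> exists j, (x \in B j) && (y \in B j).
Proof.
case: pd => [_ [cover _]] /cover [X Xbags xyX].
by exists (index X bags); rewrite nth_index.
Qed.

Lemma bag_interval x i j k : i <= j <= k -> x \in B i -> x \in B k -> x \in B j.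
Proof. by case: pd => [_ [_ interval]]; apply: interval. Qed.

Lemma last_bag x : exists k, x \in B k /\ forall j, x \in B j -> j <= k.
Proof.
have [j xj] := bag_of_vertex x.
have [k xk k_max] := ex_maxnP (ex_intro _ j xj) (fun i xi => ltnW (bag_index_lt xi)).
by exists k.
Qed.

Lemma first_bag x : exists a, x \in B a /\ forall j, x \in B j -> a <= j.
Proof.
by have [k xk k_min] := ex_minnP (bag_of_vertex x); exists k.
Qed.

(* w shares a bag with p, and a bag strictly inside (a, b) would hold p, w
   and the other neighbour of w. *)
Lemma nonleaf_nbr_end_bag p a b w :
  (forall j, p \in B j -> a <= j <= b) -> p \in B a -> p \in B b ->
  e p w -> (exists x, e w x /\ x != p) -> (w \in B a) || (w \in B b).
Proof.
move=> p_int pa pb epw [x [ewx xp]].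
have [j1 /andP [pj1 wj1]] := bag_of_edge epw.
have [j2 /andP [wj2 xj2]] := bag_of_edge ewx.
case/andP: (p_int _ pj1) => aj1 j1b.
case: (ltnP j2 a) => [j2a | aj2].
  by rewrite (bag_interval (i := j2) (k := j1)) // (ltnW j2a) aj1.
case: (ltnP b j2) => [bj2 | j2b].
  by rewrite orbC (bag_interval (i := j1) (k := j2)) // j1b (ltnW bj2).
have pj2 : p \in B j2 by apply: (bag_interval (i := a) (k := b)); rewrite ?aj2.
exfalso; apply: (bag_no_three pj2 wj2 xj2 (edge_neq e_irr epw) (edge_neq e_irr ewx)).
by rewrite eq_sym.
Qed.

Lemma nonleaf_nbr_exists S p w :
  1 < #|nbr S w| -> exists x, e w x /\ x != p.
Proof.
case/card_gt1P => [x [y [xN yN xy]]]; move: xN yN; rewrite !in_nbr.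
case/andP => _ ewx /andP [_ ewy].
by case: (eqVneq x p) => [<-|xp]; [exists y; rewrite eq_sym | exists x].
Qed.

Lemma no_three_nonleaf_nbrs S p w1 w2 w3 :
  w1 \in nbr S p -> w2 \in nbr S p -> w3 \in nbr S p ->
  1 < #|nbr S w1| -> 1 < #|nbr S w2| -> 1 < #|nbr S w3| ->
  w1 != w2 -> w2 != w3 -> w1 != w3 -> False.
Proof.
rewrite !in_nbr => /andP [_ e1] /andP [_ e2] /andP [_ e3] n1 n2 n3 d12 d23 d13.
have [a [pa a_min]] := first_bag p; have [b [pb b_max]] := last_bag p.
have p_int j : p \in B j -> a <= j <= b by move=> pj; rewrite a_min ?b_max.
have end_bag := nonleaf_nbr_end_bag p_int pa pb.
have [p1 p2 p3] := And3 (edge_neq e_irr e1) (edge_neq e_irr e2) (edge_neq e_irr e3).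
have /orP[h1|h1] := end_bag _ e1 (nonleaf_nbr_exists p n1);
have /orP[h2|h2] := end_bag _ e2 (nonleaf_nbr_exists p n2);
have /orP[h3|h3] := end_bag _ e3 (nonleaf_nbr_exists p n3);
  solve [ exact: (bag_no_three pa h1 h2) | exact: (bag_no_three pa h1 h3)
        | exact: (bag_no_three pa h2 h3) | exact: (bag_no_three pb h1 h2)
        | exact: (bag_no_three pb h1 h3) | exact: (bag_no_three pb h2 h3) ].
Qed.

Lemma nonleaf_nbrs_uniq S p u : u \in nbr S p -> 1 < #|nbr S u| ->
  forall q1 q2, q1 \in nbr S p -> q2 \in nbr S p -> q1 != u -> q2 != u ->
    1 < #|nbr S q1| -> 1 < #|nbr S q2| -> q1 = q2.
Proof.
move=> uN u_deg q1 q2 q1N q2N q1u q2u n1 n2; apply/eqP/negPn/negP => q12.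
by apply: (no_three_nonleaf_nbrs uN q1N q2N u_deg n1 n2); rewrite // eq_sym.
Qed.

(* Take v in S whose last bag i is as early as possible. *)
Lemma first_ending_vertex S : S != set0 -> exists v i,
  [/\ v \in S, v \in B i, forall j, v \in B j -> j <= i
    & forall x j, x \in S -> j <= i -> x \in B j -> x \in B i].
Proof.
case/set0Pn => x0 x0S.
pose ends_at k := [exists x in S, (x \in B k) &&
   [forall j : 'I_(size bags), (x \in B j) ==> (j <= k)]].
have ends_atP x : exists k, (x \in B k) &&
    [forall j : 'I_(size bags), (x \in B j) ==> (j <= k)].
  have [k [xk k_max]] := last_bag x; exists k; rewrite xk.
  by apply/forallP => j; apply/implyP => /k_max.
have [k0 x0k0] := ends_atP x0.
have : exists k, ends_at k by exists k0; apply/exists_inP; exists x0.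
case/ex_minnP => i /exists_inP [v vS /andP [vi /forallP v_last]] i_min.
exists v, i; split=> // [j vj | x j xS ji xj].
  exact: (implyP (v_last (Ordinal (bag_index_lt vj))) vj).
have [k /andP [xk k_last]] := ends_atP x.
have ik : i <= k by apply: i_min; apply/exists_inP; exists x; rewrite ?xk.
by apply: (bag_interval (i := j) (k := k)); rewrite ?ji.
Qed.

Lemma pathwidth1_leaf S : S != set0 -> exists2 v, v \in S &
  (nbr S v = set0 \/ exists u, nbr S v = [set u] /\
     forall w1 w2, w1 \in nbr S u -> w2 \in nbr S u ->
        1 < #|nbr S w1| -> 1 < #|nbr S w2| -> w1 = w2).
Proof.
move=> /first_ending_vertex [v [i [vS vi v_last seen_in_i]]].
have Nv_i y : y \in nbr S v -> y \in B i.
  rewrite in_nbr => /andP [yS evy]; have [j /andP [vj yj]] := bag_of_edge evy.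
  exact: (seen_in_i _ _ yS (v_last _ vj) yj).
exists v => //.
have [-> | [u uN]] := set_0Vmem (nbr S v); [by left | right; exists u].
have Nv : nbr S v = [set u].
  apply/setP => y; rewrite inE; apply/idP/eqP => [yN | ->] //.
  apply/eqP/negPn/negP => yu.
  apply: (bag_no_three vi (Nv_i _ uN) (Nv_i _ yN) (nbr_neq e_irr uN) _ (nbr_neq e_irr yN)).
  by rewrite eq_sym.
split => // w1 w2 w1N w2N n1 n2; apply/eqP/negPn/negP => w12.
have ui := Nv_i _ uN.
have [k [uk k_max]] := last_bag u.
(* every non-leaf neighbour w of u lies in the last bag of u: a bag holding w
   and another neighbour x of w can neither be <= i (then v, u, w are in bag i)
   nor in [i, k] (then u, w, x share it) *)
have wk w : w \in nbr S u -> 1 < #|nbr S w| -> w \in B k.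
  move=> wN nw; have wS := nbr_sub wN; have euw : e u w by move: wN; rewrite in_nbr => /andP [].
  have wv : w != v by apply: contraTneq nw => ->; rewrite Nv cards1.
  have [x [ewx xu]] := nonleaf_nbr_exists u nw.
  have [j1 /andP [uj1 wj1]] := bag_of_edge euw.
  have [j2 /andP [wj2 xj2]] := bag_of_edge ewx.
  case: (leqP j2 i) => [j2i | ij2].
    have wi := seen_in_i _ _ wS j2i wj2.
    exfalso; apply: (bag_no_three vi ui wi (nbr_neq e_irr uN) (edge_neq e_irr euw)).
    by rewrite eq_sym.
  case: (leqP j2 k) => [j2k | kj2].
    have uj2 : u \in B j2.
      by apply: (bag_interval (i := i) (k := k)); rewrite // (ltnW ij2).
    exfalso; apply: (bag_no_three uj2 wj2 xj2 (edge_neq e_irr euw) (edge_neq e_irr ewx)).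
    by rewrite eq_sym.
  by apply: (bag_interval (i := j1) (k := j2)); rewrite ?k_max ?(ltnW kj2).
exact: (bag_no_three uk (wk _ w1N n1) (wk _ w2N n2) (nbr_neq e_irr w1N) w12 (nbr_neq e_irr w2N)).
Qed.

End PathwidthOne.

(** * Reductions at a leaf *)

Section LeafReductions.
Variables (T : finType) (e : rel T).
Hypotheses (e_sym : symmetric e) (e_irr : irreflexive e).
Implicit Types (S D : {set T}) (v u w x y p q r : T).
Local Notation nbr := (nbr e).
Local Notation mpds := (mpds e).
Local Notation mpds_count := (mpds_count e).

Lemma nbr_setD1_far S v x : v \notin nbr S x -> nbr (S :\ v) x = nbr S x.
Proof. by move=> vN; rewrite nbr_setD1 setD1_notin. Qed.

Lemma mpds_pendant S D v u : mpds S D -> v \in S -> nbr S v = [set u] ->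
  (v \in D) = (u \notin D).
Proof.
move=> mD vS Nv; case: (boolP (v \in D)) => vD /=.
  have v1 : #|nbr S v| = 1 by rewrite Nv cards1.
  have /setP/(_ u) := mpds_leaf mD vD v1.
  by rewrite Nv !inE eqxx => /negbT.
by move: (mpds_dom mD vS vD); rewrite Nv cards1I => /eqP; rewrite eqb1 => ->.
Qed.

Lemma mpds_count_isolated S v : v \in S -> nbr S v = set0 ->
  mpds_count S <= mpds_count (S :\ v).
Proof.
move=> vS Nv.
have vD D : mpds S D -> v \in D.
  move=> mD; apply: contraT => vD.
  by move: (mpds_dom mD vS vD); rewrite Nv set0I cards0.
have far x : x \in S -> v \notin nbr S x.
  by move=> xS; apply/negP => /(nbr_sym e_sym xS); rewrite Nv inE.
apply: (card_set_le_inj (g := fun D => D :\ v)); last first.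
  by move=> D1 D2 /vD v1 /vD v2; apply: setD1_inj.
move=> D mD; apply: mpdsI.
- exact/setSD/(mpds_sub mD).
- move=> x; rewrite !inE => /andP [xv xS]; rewrite xv /= => xD.
  by rewrite nbr_setD1_far ?far // setID1_notin ?far // (mpds_dom mD).
- move=> x; rewrite !inE => /andP [_ xD].
  have xS := subsetP (mpds_sub mD) x xD.
  by rewrite nbr_setD1_far ?far // setID1_notin ?far //; apply: mpds_leaf.
Qed.

Lemma mpds_count_twin_leaves S v u w : v \in S -> nbr S v = [set u] ->
  w \in nbr S u -> w != v -> #|nbr S w| = 1 ->
  mpds_count S <= mpds_count (S :\ v).
Proof.
move=> vS Nv wN wv w1.
have uN : u \in nbr S v by rewrite Nv set11.
have [uS wS] := (nbr_sub uN, nbr_sub wN).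
have Nw : nbr S w = [set u] := card1_set1 (nbr_sym e_sym uS wN) w1.
apply: (card_set_le_inj (g := fun D => D)) => // D mD.
have [vD wD] := (mpds_pendant mD vS Nv, mpds_pendant mD wS Nw).
have uD : u \in D.
  apply: contraT => uD; move: vD wD; rewrite uD => vD wD.
  suff : 1 < #|nbr S u :&: D| by rewrite (mpds_dom mD uS uD).
  apply: (card_gt1_of (a := v) (b := w)); last by rewrite eq_sym.
    by rewrite in_setI vD (nbr_sym e_sym vS uN).
  by rewrite in_setI wD wN.
move: vD wD; rewrite uD /= => /negbT vD /negbT wD.
apply: mpdsI.
- apply/subsetP => x xD; rewrite !inE (subsetP (mpds_sub mD) _ xD) andbT.
  by apply: contraNneq vD => <-.
- by move=> x; rewrite !inE => /andP [_ xS] xD; rewrite nbr_setD1 setD1I_notin // (mpds_dom mD).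
- move=> x xD; have xS := subsetP (mpds_sub mD) x xD.
  case: (eqVneq x u) => [-> | xu] x1.
    have wNv : w \in nbr (S :\ v) u by rewrite nbr_setD1 in_setD1 wv wN.
    by rewrite (card1_set1 wNv x1) disjoint_setI0 // disjoints1.
  by move: x1; rewrite nbr_setD1_far ?(notin_nbr_of_set1 e_sym xS Nv xu) //; apply: mpds_leaf.
Qed.

Lemma mpds_K2_component S D a b : mpds S D ->
  nbr S a = [set b] -> nbr S b = [set a] -> a \in D -> mpds (S :\ a :\ b) (D :\ a).
Proof.
move=> mD Na Nb aD.
have bS : b \in S by apply: (@nbr_sub _ e _ a); rewrite Na set11.
have bD : b \notin D by rewrite (mpds_pendant mD bS Nb) aD.
have far x : x \in S :\ a :\ b ->
    [/\ a \notin nbr S x, b \notin nbr S x & nbr (S :\ a :\ b) x = nbr S x].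
  rewrite !in_setD1 => /and3P [xb xa xS].
  have aN := notin_nbr_of_set1 e_sym xS Na xb.
  have bN := notin_nbr_of_set1 e_sym xS Nb xa.
  by split => //; rewrite !nbr_setD1 !setD1_notin.
apply: mpdsI.
- apply/subsetP => x; rewrite !inE => /andP [xa xD].
  by rewrite xa (subsetP (mpds_sub mD) _ xD) !andbT; apply: contraNneq bD => <-.
- move=> x /[dup] /far [aN _ ->]; rewrite !inE => /and3P [_ xa xS].
  by rewrite xa /= setID1_notin //; apply: mpds_dom.
- move=> x; rewrite in_setD1 => /andP [xa xD].
  have xS := subsetP (mpds_sub mD) x xD.
  have xb : x != b by apply: contraNneq bD => <-.
  have xSab : x \in S :\ a :\ b by rewrite !in_setD1 xa xb xS.
  have [aN _ ->] := far x xSab.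
  by rewrite setID1_notin //; apply: mpds_leaf.
Qed.

Lemma mpds_count_K2 S v u : v \in S -> nbr S v = [set u] -> nbr S u = [set v] ->
  mpds_count S <= 2 * mpds_count (S :\ v :\ u).
Proof.
move=> vS Nv Nu.
have S_uv : S :\ u :\ v = S :\ v :\ u by rewrite !setDDl setUC.
rewrite /mpds_count (card_set_split _ (fun D => u \in D)) mul2n -addnn leq_add //.
  apply: (card_set_le_inj (g := fun D => D :\ u)).
    by move=> D /andP [mD uD]; rewrite -S_uv; apply: mpds_K2_component.
  by move=> D1 D2 /andP [_ u1] /andP [_ u2]; apply: setD1_inj.
have in_v D : mpds S D && (u \notin D) -> v \in D.
  by case/andP => mD uD; rewrite (mpds_pendant mD vS Nv).
apply: (card_set_le_inj (g := fun D => D :\ v)).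
  by move=> D /[dup] /in_v vD /andP [mD _]; apply: mpds_K2_component.
by move=> D1 D2 /in_v v1 /in_v v2; apply: setD1_inj.
Qed.

End LeafReductions.

Section PendantPath.
Variables (T : finType) (e : rel T).
Hypotheses (e_sym : symmetric e) (e_irr : irreflexive e).
Implicit Types (D E : {set T}) (x y q r : T).
Local Notation nbr := (nbr e).
Local Notation mpds := (mpds e).
Local Notation mpds_count := (mpds_count e).

Variables (S : {set T}) (v u p : T).
Hypotheses (vS : v \in S) (Nv : nbr S v = [set u]) (Nu : nbr S u = [set v; p])
  (pv : p != v).

Lemma pendant_uS : u \in S.
Proof. by apply: (@nbr_sub _ e _ v); rewrite Nv set11. Qed.

Lemma pendant_pS : p \in S.
Proof. by apply: (@nbr_sub _ e _ u); rewrite Nu !inE eqxx orbT. Qed.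

Lemma pendant_uv : u != v.
Proof. by rewrite eq_sym; apply: (nbr_neq e_irr (S := S)); rewrite Nv set11. Qed.

Lemma pendant_pu : p != u.
Proof. by rewrite eq_sym; apply: (nbr_neq e_irr (S := S)); rewrite Nu !inE eqxx orbT. Qed.

Lemma pendant_v_far x : x \in S -> x != u -> v \notin nbr S x.
Proof. by move=> xS xu; apply: (notin_nbr_of_set1 e_sym xS Nv xu). Qed.

Lemma pendant_u_far x : x \in S -> x != v -> x != p -> u \notin nbr S x.
Proof.
move=> xS xv xp; apply/negP => /(nbr_sym e_sym xS).
by rewrite Nu !inE (negbTE xv) (negbTE xp).
Qed.

Lemma pendant_nbr_u : nbr (S :\ v) u = [set p].
Proof.
apply/setP => y; rewrite nbr_setD1 in_setD1 Nu !inE.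
by case: (eqVneq y v) => [->|] //=; rewrite eq_sym (negbTE pv).
Qed.

Lemma pendant_v_notin D : mpds S D -> u \in D -> v \notin D.
Proof. by move=> mD uD; rewrite (mpds_pendant mD vS Nv) uD. Qed.

Lemma mpds_pendant_keep D : mpds S D -> u \in D -> p \notin D -> mpds (S :\ v) D.
Proof.
move=> mD uD pD; have vD := pendant_v_notin mD uD.
apply: mpdsI.
- apply/subsetP => x xD; rewrite in_setD1 (subsetP (mpds_sub mD) _ xD) andbT.
  by apply: contraNneq vD => <-.
- by move=> x; rewrite in_setD1 => /andP [_ xS] xD; rewrite nbr_setD1 setD1I_notin // mpds_dom.
- move=> x xD; have xS := subsetP (mpds_sub mD) x xD.
  case: (eqVneq x u) => [-> _ | xu]; first by rewrite pendant_nbr_u disjoint_setI0 ?disjoints1.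
  by rewrite nbr_setD1_far ?pendant_v_far //; apply: mpds_leaf.
Qed.

Lemma mpds_pendant_drop D : mpds S D -> u \in D -> p \in D -> mpds (S :\ v) (D :\ u).
Proof.
move=> mD uD pD; have vD := pendant_v_notin mD uD.
apply: mpdsI.
- apply/subsetP => x; rewrite !in_setD1 => /andP [xu xD].
  rewrite (subsetP (mpds_sub mD) _ xD) andbT.
  by apply: contraNneq vD => <-.
- move=> x; rewrite !in_setD1 => /andP [xv xS].
  case: (eqVneq x u) => [-> _ | xu /= xD].
    by rewrite pendant_nbr_u cards1I in_setD1 pendant_pu pD.
  have xp : x != p by apply: contraNneq xD => ->.
  rewrite nbr_setD1_far ?pendant_v_far // setID1_notin ?pendant_u_far //.
  exact: mpds_dom.
- move=> x; rewrite in_setD1 => /andP [xu xD]; have xS := subsetP (mpds_sub mD) x xD.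
  rewrite nbr_setD1_far ?pendant_v_far // setIDA => x1.
  by rewrite (mpds_leaf mD xD x1) set0D.
Qed.

Lemma mpds_count_pendant_in_u :
  #|[set D | mpds S D && (u \in D)]| <= mpds_count (S :\ v).
Proof.
rewrite /mpds_count (card_set_split (mpds (S :\ v)) (fun D => u \in D)).
rewrite (card_set_split _ (fun D => p \in D)) addnC leq_add //.
  apply: (card_set_le_inj (g := fun D => D)) => // D /andP [/andP [mD uD] pD].
  by rewrite mpds_pendant_keep.
apply: (card_set_le_inj (g := fun D => D :\ u)).
  by move=> D /andP [/andP [mD uD] pD]; rewrite mpds_pendant_drop // setD11.
by move=> D1 D2 /andP [/andP [_ u1] _] /andP [/andP [_ u2] _]; apply: setD1_inj.
Qed.

Local Notation S2 := (S :\ v :\ u :\ p).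

Lemma pendant_in_S2 x : (x \in S2) = [&& x != p, x != u, x != v & x \in S].
Proof. by rewrite !in_setD1. Qed.

Lemma pendant_S2_sub x : x \in S2 -> x \in S.
Proof. by rewrite pendant_in_S2 => /and4P []. Qed.

Lemma pendant_S2_out E : mpds S2 E -> [/\ v \notin E, u \notin E & p \notin E].
Proof. by move=> mE; split; apply: (mpds_notin mE); rewrite pendant_in_S2 eqxx ?andbF. Qed.

Lemma pendant_nbr_S2_far x : x \in S2 -> p \notin nbr S x -> nbr S2 x = nbr S x.
Proof.
rewrite pendant_in_S2 => /and4P [xp xu xv xS] pN.
by rewrite !nbr_setD1 !setD1_notin ?pendant_v_far ?pendant_u_far.
Qed.

Lemma pendant_nbr_S2I x D : x \in S2 -> u \notin D -> p \notin D ->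
  nbr S2 x :&: D = nbr S x :&: D.
Proof.
rewrite pendant_in_S2 => /and4P [xp xu xv xS] uD pD.
by rewrite !nbr_setD1 (setD1_notin (pendant_v_far xS xu)) !setD1I_notin.
Qed.

Lemma pendant_notin_u D : mpds S D -> u \notin D ->
  [/\ v \in D, p \notin D & exists q, nbr S p :&: D = [set q]].
Proof.
move=> mD uD.
have vD : v \in D by rewrite (mpds_pendant mD vS Nv).
have pD : p \notin D.
  apply: contraT => /negbNE pD.
  suff : 1 < #|nbr S u :&: D| by rewrite (mpds_dom mD pendant_uS uD).
  apply: (card_gt1_of (a := v) (b := p)); last by rewrite eq_sym.
    by rewrite in_setI Nu !inE eqxx vD.
  by rewrite in_setI Nu !inE eqxx pD orbT.
split=> //; apply/cards1P/eqP; exact: mpds_dom pendant_pS pD.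
Qed.

Lemma pendant_nbr_p_S2 D q : mpds S D -> u \notin D -> q \in nbr S p -> q \in D ->
  q \in S2.
Proof.
move=> mD uD qN qD; case: (pendant_notin_u mD uD) => _ pD _.
rewrite pendant_in_S2 (nbr_sub qN) andbT; apply/and3P; split.
- by apply: contraNneq pD => <-.
- by apply: contraNneq uD => <-.
- by apply: contraTneq qN => ->; apply: pendant_v_far pendant_pS pendant_pu.
Qed.

Lemma pendant_notin_u_inj D1 D2 : mpds S D1 -> mpds S D2 -> u \notin D1 -> u \notin D2 ->
  D1 :&: S2 = D2 :&: S2 -> D1 = D2.
Proof.
move=> mD1 mD2 u1 u2 /setP eqS2; apply/setP => y.
have [v1 p1 _] := pendant_notin_u mD1 u1; have [v2 p2 _] := pendant_notin_u mD2 u2.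
move: (eqS2 y); rewrite !in_setI pendant_in_S2.
case: (eqVneq y p) => [->|yp] /=; first by rewrite (negbTE p1) (negbTE p2).
case: (eqVneq y u) => [->|yu] /=; first by rewrite (negbTE u1) (negbTE u2).
case: (eqVneq y v) => [->|yv] /=; first by rewrite v1 v2.
case: (boolP (y \in S)) => yS; rewrite ?andbT ?andbF //.
by rewrite (negbTE (mpds_notin mD1 yS)) (negbTE (mpds_notin mD2 yS)).
Qed.

Lemma mpds_pendant_restrict D : mpds S D -> u \notin D ->
  (forall q, q \in nbr S p -> q \in D -> #|nbr S2 q| = 1 -> nbr S2 q :&: D = set0) ->
  mpds S2 (D :&: S2).
Proof.
move=> mD uD good; case: (pendant_notin_u mD uD) => _ pD _.
apply: mpdsI; first exact: subsetIr.
- move=> x xS2; rewrite in_setI xS2 andbT => xD.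
  by rewrite nbr_setIS pendant_nbr_S2I // mpds_dom // pendant_S2_sub.
- move=> x; rewrite in_setI => /andP [xD xS2] x1; rewrite nbr_setIS.
  case: (boolP (p \in nbr S x)) => pN.
    by apply: good; rewrite ?(nbr_sym e_sym (pendant_S2_sub xS2)).
  by move: x1; rewrite pendant_nbr_S2_far //; apply: mpds_leaf.
Qed.

Lemma mpds_pendant_restrictD D q r : mpds S D -> u \notin D ->
  nbr S p :&: D = [set q] -> nbr S2 q = [set r] -> r \in D ->
  mpds S2 ((D :&: S2) :\: nbr S p).
Proof.
move=> mD uD NpD Nq rD; case: (pendant_notin_u mD uD) => _ pD _.
have inNpD y : y \in nbr S p -> (y \in D) = (y == q).
  by move=> yN; move/setP/(_ y): NpD; rewrite in_setI yN inE.
have rN : r \in nbr S2 q by rewrite Nq set11.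
have rS2 := nbr_sub rN.
have rNp : r \notin nbr S p.
  by apply: contraL rD => /inNpD ->; rewrite eq_sym (nbr_neq e_irr rN).
apply: mpdsI.
- by apply/subsetP => x; rewrite in_setD in_setI => /and3P [_ _ ->].
- move=> x xS2; case: (eqVneq x q) => [-> _ | xq].
    by rewrite Nq cards1I in_setD in_setI rNp rD rS2.
  rewrite in_setD in_setI xS2 andbT negb_and negbK => xDN.
  have xD : x \notin D.
    by apply: contraL xq => xD; move: xDN; rewrite xD orbF negbK => /inNpD <-.
  rewrite setIDA nbr_setIS pendant_nbr_S2I // (setDidPl _).
    exact: mpds_dom (pendant_S2_sub xS2) xD.
  apply/pred0P => y /=; apply/negP => /andP [/setIP [yN yD] /inNpD].
  rewrite yD => /esym/eqP yq.
  have : x \in nbr S2 q by rewrite -yq in_nbr xS2 e_sym; move: yN; rewrite in_nbr => /andP [].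
  by rewrite Nq inE => /eqP xr; move: xD; rewrite xr rD.
- move=> x; rewrite in_setD in_setI => /and3P [xNp xD xS2] x1.
  have pN : p \notin nbr S x by apply: contra xNp => /(nbr_sym e_sym (pendant_S2_sub xS2)).
  move: x1; rewrite pendant_nbr_S2_far // => x1.
  apply/eqP; rewrite -subset0 -(mpds_leaf mD xD x1); apply: setIS.
  by apply/subsetP => y; rewrite in_setD in_setI => /and3P [_ ->].
Qed.

(* D :&: S2 is an mpds of S2 unless the D-neighbour q of p has become a leaf of
   G[S2] whose neighbour lies in D; such a bad D is sent to (D :&: S2) :\ q,
   and q is recovered as the unique non-leaf neighbour of p other than u. *)
Definition pendant_bad D := [exists q, [&& q \in nbr S p, q \in D,
  #|nbr S2 q| == 1 & nbr S2 q :&: D != set0]].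

Lemma pendant_badP D : mpds S D -> u \notin D -> pendant_bad D -> exists q r,
  [/\ nbr S p :&: D = [set q], nbr S2 q = [set r], r \in D, q != u
    & 1 < #|nbr S q|].
Proof.
move=> mD uD /existsP [q /and4P [qN qD /eqP q1 /set0Pn [r /setIP [rN rD]]]].
have [_ pD _] := pendant_notin_u mD uD.
have rS2 := nbr_sub rN.
exists q, r; split=> //.
- by apply: card1_set1 (mpds_dom mD pendant_pS pD); rewrite in_setI qN qD.
- exact: card1_set1 rN q1.
- by apply: contraNneq uD => <-.
apply: (card_gt1_of (a := p) (b := r)); first exact: (nbr_sym e_sym pendant_pS qN).
  by move: rN; rewrite !in_nbr pendant_in_S2 => /andP [/and4P [_ _ _ ->] ->].
by move: rS2; rewrite pendant_in_S2 eq_sym => /and4P [].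
Qed.

Lemma mpds_count_pendant_notin_u :
  (forall q1 q2, q1 \in nbr S p -> q2 \in nbr S p -> q1 != u -> q2 != u ->
     1 < #|nbr S q1| -> 1 < #|nbr S q2| -> q1 = q2) ->
  #|[set D | mpds S D && (u \notin D)]| <= mpds_count S2.
Proof.
move=> nonleaf_uniq.
rewrite /mpds_count (card_set_split (mpds S2) (fun E => nbr S p :&: E != set0)).
rewrite (card_set_split _ (fun D => ~~ pendant_bad D)) leq_add //.
  apply: (card_set_le_inj (g := fun D => D :&: S2)); last first.
    move=> D1 D2 /andP [/andP [mD1 u1] _] /andP [/andP [mD2 u2] _].
    exact: pendant_notin_u_inj.
  move=> D /andP [/andP [mD uD] good].
  rewrite mpds_pendant_restrict //=; last first.
    move=> q qN qD q1; apply/eqP/negPn/negP => NqD; apply: (negP good).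
    by apply/existsP; exists q; rewrite qN qD q1 eqxx.
  have [_ _ [q NpD]] := pendant_notin_u mD uD.
  have /setIP [qN qD] : q \in nbr S p :&: D by rewrite NpD set11.
  apply/set0Pn; exists q; rewrite !in_setI qN qD.
  exact: pendant_nbr_p_S2 qN qD.
apply: (card_set_le_inj (g := fun D => (D :&: S2) :\: nbr S p)).
  move=> D /andP [/andP [mD uD] /negPn/(pendant_badP mD uD) [q [r [NpD Nq rD _ _]]]].
  rewrite (mpds_pendant_restrictD mD uD NpD Nq rD) negbK /=.
  by apply/eqP/setP => y; rewrite in_setI in_setD in_set0; case: (y \in nbr S p).
move=> D1 D2 /andP [/andP [mD1 u1] /negPn/(pendant_badP mD1 u1) [q1 [r1 [NpD1 _ _ q1u q1_2]]]].
move=> /andP [/andP [mD2 u2] /negPn/(pendant_badP mD2 u2) [q2 [r2 [NpD2 _ _ q2u q2_2]]]].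
have q1N : q1 \in nbr S p by move/setP/(_ q1): NpD1; rewrite set11 in_setI => /andP [].
have q2N : q2 \in nbr S p by move/setP/(_ q2): NpD2; rewrite set11 in_setI => /andP [].
have q12 := nonleaf_uniq _ _ q1N q2N q1u q2u q1_2 q2_2; subst q2.
move=> /setP eqD; apply: pendant_notin_u_inj => //; apply/setP => y.
case: (boolP (y \in nbr S p)) => yN; last by move: (eqD y); rewrite !in_setD yN.
by move/setP/(_ y): NpD1; move/setP/(_ y): NpD2; rewrite !in_setI yN /= => -> ->.
Qed.

Lemma mpds_count_pendant_path :
  (forall q1 q2, q1 \in nbr S p -> q2 \in nbr S p -> q1 != u -> q2 != u ->
     1 < #|nbr S q1| -> 1 < #|nbr S q2| -> q1 = q2) ->
  mpds_count S <= mpds_count (S :\ v) + mpds_count S2.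
Proof.
move=> nonleaf_uniq; rewrite {1}/mpds_count (card_set_split _ (fun D => u \in D)).
by rewrite leq_add ?mpds_count_pendant_in_u ?mpds_count_pendant_notin_u.
Qed.

Lemma pendant_nbr_u_or_p E : mpds (S :\ v) E -> (u \in E) = (p \notin E).
Proof.
have uSv : u \in S :\ v by rewrite in_setD1 pendant_uv pendant_uS.
by move=> mE; apply: mpds_pendant mE uSv pendant_nbr_u.
Qed.

Lemma mpds_pendant_add_u E : #|nbr S p| != 1 -> mpds (S :\ v) E -> mpds S (u |: E).
Proof.
move=> p_deg mE.
have Nu2 : #|nbr S u| = 2 by rewrite Nu cards2 eq_sym pv.
have vE : v \notin E by apply: mpds_notin mE _; rewrite setD11.
have ES x : x \in E -> x \in S.
  by move=> /(subsetP (mpds_sub mE)); rewrite in_setD1 => /andP [].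
apply: mpdsI.
- by apply/subsetP => x; rewrite in_setU1 => /orP [/eqP -> | /ES]; rewrite ?pendant_uS.
- move=> x xS; rewrite in_setU1 negb_or => /andP [xu xE].
  case: (eqVneq x v) => [-> | xv]; first by rewrite Nv cards1I setU11.
  have xSv : x \in S :\ v by rewrite in_setD1 xv xS.
  have NxE : nbr S x :&: E = nbr (S :\ v) x :&: E by rewrite nbr_setD1 setD1I_notin.
  case: (eqVneq x p) => [xp | xp].
    have uE : u \in E by rewrite (pendant_nbr_u_or_p mE) -xp.
    by rewrite (setUidPr _) ?sub1set // NxE mpds_dom.
  by rewrite setIU1_notin ?pendant_u_far // NxE mpds_dom.
- move=> x; rewrite in_setU1 => /orP [/eqP -> | xE]; first by rewrite Nu2.
  have xS := ES x xE.
  have xv : x != v by apply: contraNneq vE => <-.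
  case: (eqVneq x u) => [-> | xu]; first by rewrite Nu2.
  case: (eqVneq x p) => [-> /eqP | xp x1]; first by rewrite (negbTE p_deg).
  rewrite setIU1_notin ?pendant_u_far // -(nbr_setD1_far (pendant_v_far xS xu)).
  by apply: mpds_leaf mE xE _; rewrite nbr_setD1_far ?pendant_v_far.
Qed.

Lemma mpds_count_pendant_add_u : #|nbr S p| != 1 ->
  mpds_count (S :\ v) <= #|[set D | mpds S D && (v \notin D)]|.
Proof.
move=> p_deg; apply: (card_set_le_inj (g := fun E => u |: E)).
  move=> E mE; rewrite mpds_pendant_add_u //= in_setU1 negb_or eq_sym pendant_uv.
  by apply: mpds_notin mE _; rewrite setD11.
move=> E1 E2 m1 m2 /setP eqE; apply/setP => y.
case: (eqVneq y u) => [->|yu]; last by move: (eqE y); rewrite !in_setU1 (negbTE yu).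
move: (eqE p); rewrite (pendant_nbr_u_or_p m1) (pendant_nbr_u_or_p m2).
by rewrite !in_setU1 (negbTE pendant_pu) /= => ->.
Qed.

Lemma mpds_count_setD1_pendant : #|nbr S p| != 1 ->
  mpds_count (S :\ v) <= mpds_count S.
Proof.
move=> p_deg; apply: leq_trans (mpds_count_pendant_add_u p_deg) _.
by apply/subset_leq_card/subsetP => D; rewrite !inE => /andP [->].
Qed.

Section LongPendantPath.
Variables q r : T.
Hypotheses (Np : nbr S p = [set u; q]) (qu : q != u)
  (Nq : nbr S2 q = [set r]) (r_deg : 1 < #|nbr S2 r|).

Lemma pendant_qN : q \in nbr S p.
Proof. by rewrite Np !inE eqxx orbT. Qed.

Lemma pendant_q_S2 : q \in S2.
Proof.
have qN := pendant_qN; rewrite pendant_in_S2 (nbr_sub qN) andbT qu.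
rewrite eq_sym (nbr_neq e_irr qN) /=; apply: contraTneq qN => ->.
exact: pendant_v_far pendant_pS pendant_pu.
Qed.

Lemma pendant_rN : r \in nbr S2 q.
Proof. by rewrite Nq set11. Qed.

Lemma pendant_p_far x : x \in S -> x != u -> x != q -> p \notin nbr S x.
Proof.
move=> xS xu xq; apply/negP => /(nbr_sym e_sym xS).
by rewrite Np !inE (negbTE xu) (negbTE xq).
Qed.

Lemma pendant_nbr_S2_near x : x \in S2 -> x != q -> nbr S2 x = nbr S x.
Proof.
move=> xS2 xq; apply: (pendant_nbr_S2_far xS2).
by move: xS2; rewrite pendant_in_S2 => /and4P [_ xu _ xS]; apply: pendant_p_far.
Qed.

Lemma pendant_q_deg : 1 < #|nbr S q|.
Proof.
have rN := pendant_rN; apply: (card_gt1_of (a := p) (b := r)).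
- exact: (nbr_sym e_sym pendant_pS pendant_qN).
- by move: rN; rewrite !in_nbr pendant_in_S2 => /andP [/and4P [_ _ _ ->] ->].
- by move: (nbr_sub rN); rewrite pendant_in_S2 eq_sym => /and4P [].
Qed.

Lemma pendant_q_nbr x : x \in S2 -> q \in nbr S x -> x = r.
Proof.
move=> xS2 qN; have : x \in nbr S2 q.
  by rewrite in_nbr xS2 e_sym; move: qN; rewrite in_nbr => /andP [].
by rewrite Nq inE => /eqP.
Qed.

Lemma pendant_q_or_r E : mpds S2 E -> (q \in E) = (r \notin E).
Proof. by move=> mE; apply: mpds_pendant mE pendant_q_S2 Nq. Qed.

Lemma mpds_pendant_add_vq E : mpds S2 E -> mpds S (v |: (q |: E)).
Proof.
move=> mE; set D := v |: (q |: E).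
have [_ uE pE] := pendant_S2_out mE.
move: pendant_q_S2; rewrite pendant_in_S2 => /and4P [qp _ qv qS].
have uD : u \notin D by rewrite !in_setU1 (negbTE pendant_uv) (eq_sym u) (negbTE qu).
have pD : p \notin D by rewrite !in_setU1 (negbTE pv) (eq_sym p) (negbTE qp).
have ES x : x \in E -> x \in S2 by apply: (subsetP (mpds_sub mE)).
have NxD x : x \in S2 -> x != q -> (q \in nbr S x -> q \in E) ->
    nbr S x :&: D = nbr S2 x :&: E.
  move=> xS2 xq qE; rewrite -pendant_nbr_S2_near // setIU1_notin; last first.
    by apply/negP => /nbr_sub; rewrite pendant_in_S2 eqxx !andbF.
  case: (boolP (q \in E)) => qE'; first by rewrite (setUidPr _) // sub1set.
  by rewrite setIU1_notin // pendant_nbr_S2_near //; apply: contra qE'.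
apply: mpdsI.
- apply/subsetP => x; rewrite !in_setU1.
  by case/orP => [/eqP -> // | /orP [/eqP -> // | /ES/pendant_S2_sub //]].
- move=> x xS xD.
  case: (eqVneq x u) => [-> | xu].
    by rewrite Nu setI_set2_notin ?cards1 ?setU11.
  case: (eqVneq x p) => [-> | xp].
    by rewrite Np setUC setI_set2_notin ?cards1 // !in_setU1 eqxx orbT.
  move: xD; rewrite !in_setU1 !negb_or => /and3P [xv xq xE].
  have xS2 : x \in S2 by rewrite pendant_in_S2 xp xu xv xS.
  rewrite NxD //; first exact: mpds_dom mE xS2 xE.
  by move=> /(pendant_q_nbr xS2) xr; rewrite pendant_q_or_r // -xr.
- move=> x; rewrite !in_setU1 => /orP [/eqP -> _ | /orP [/eqP -> | xE x1]].
  + by rewrite Nv disjoint_setI0 ?disjoints1.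
  + by move=> q1; move: pendant_q_deg; rewrite q1.
  have xS2 := ES _ xE.
  have xq : x != q by apply: contraTneq pendant_q_deg => <-; rewrite x1.
  case: (boolP (q \in nbr S x)) => qN.
    move: x1; rewrite -pendant_nbr_S2_near // (pendant_q_nbr xS2 qN) => r1.
    by move: r_deg; rewrite r1.
  rewrite NxD //; last by rewrite (negbTE qN).
  by apply: mpds_leaf mE xE _; rewrite pendant_nbr_S2_near.
Qed.

Lemma mpds_count_pendant_add_vq :
  mpds_count S2 <= #|[set D | mpds S D && (v \in D)]|.
Proof.
move: (nbr_sub pendant_rN); rewrite pendant_in_S2 => /and4P [_ _ rv _].
have rq : r != q by rewrite eq_sym (nbr_neq e_irr pendant_rN).
apply: (card_set_le_inj (g := fun E => v |: (q |: E))).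
  by move=> E mE; rewrite mpds_pendant_add_vq ?setU11.
move=> E1 E2 m1 m2 /setP eqE; apply/setP => y.
case: (eqVneq y q) => [->|yq].
  move: (eqE r); rewrite (pendant_q_or_r m1) (pendant_q_or_r m2) !in_setU1.
  by rewrite (negbTE rq) (negbTE rv) /= => ->.
case: (eqVneq y v) => [->|yv]; last by move: (eqE y); rewrite !in_setU1 (negbTE yq) (negbTE yv).
have [[v1 _ _] [v2 _ _]] := (pendant_S2_out m1, pendant_S2_out m2).
by rewrite (negbTE v1) (negbTE v2).
Qed.

Lemma mpds_count_pendant_path_lower :
  mpds_count (S :\ v) + mpds_count S2 <= mpds_count S.
Proof.
have p_deg : #|nbr S p| != 1 by rewrite Np cards2 (eq_sym u) qu.
rewrite /mpds_count (card_set_split (mpds S) (fun D => v \in D)) addnC.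
by rewrite leq_add ?mpds_count_pendant_add_u ?mpds_count_pendant_add_vq.
Qed.

End LongPendantPath.

End PendantPath.

Section Reduction.
Variables (T : finType) (e : rel T).
Hypotheses (e_sym : symmetric e) (e_irr : irreflexive e).
Variable bags : seq {set T}.
Hypotheses (pd : path_decomposition e bags)
  (bags_small : all (fun X : {set T} => #|X| <= 2) bags).
Local Notation nbr := (nbr e).
Local Notation mpds_count := (mpds_count e).

Lemma mpds_count_reduction (S : {set T}) : S != set0 ->
  [\/ exists2 S' : {set T}, #|S'| < #|S| & mpds_count S <= mpds_count S',
      exists2 S' : {set T}, #|S'| + 2 = #|S| & mpds_count S <= 2 * mpds_count S'
    | exists S' S'' : {set T}, [/\ #|S'| + 1 = #|S|, #|S''| + 3 = #|S|
        & mpds_count S <= mpds_count S' + mpds_count S'']].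
Proof.
move=> /(pathwidth1_leaf e_irr pd bags_small) [v vS [Nv | [u [Nv u_nonleaf]]]].
  by apply: Or31; exists (S :\ v); rewrite ?(cardsD1_in vS) ?mpds_count_isolated.
have uN : u \in nbr S v by rewrite Nv set11.
have [uS vNu] := (nbr_sub uN, nbr_sym e_sym vS uN).
have uSv : u \in S :\ v by rewrite in_setD1 (eq_sym u) (nbr_neq e_irr uN) uS.
have [/exists_inP [w wN /andP [wv /eqP w1]] | /exists_inPn no_twin] :=
  boolP [exists w in nbr S u, (w != v) && (#|nbr S w| == 1)].
  apply: Or31; exists (S :\ v); first by rewrite (cardsD1_in vS).
  exact: (mpds_count_twin_leaves e_sym vS Nv wN wv w1).
have nonleaf w : w \in nbr S u -> w != v -> 1 < #|nbr S w|.
  move=> wN wv; move: (no_twin w wN); rewrite wv /= ltn_neqAle eq_sym => ->.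
  by rewrite card_gt0; apply/set0Pn; exists u; exact: (nbr_sym e_sym uS wN).
have [/exists_inP [p pN pv] | /exists_inPn Nu_v] := boolP [exists p in nbr S u, p != v].
  have Nu : nbr S u = [set v; p].
    apply/setP => y; rewrite in_set2; apply/idP/orP => [yN | [] /eqP -> //].
    case: (eqVneq y v) => [-> | yv]; [by left | right].
    by rewrite (u_nonleaf y p yN pN (nonleaf y yN yv) (nonleaf p pN pv)).
  have u_deg : 1 < #|nbr S u| by rewrite Nu cards2 eq_sym pv.
  have pS := nbr_sub pN.
  apply: Or33; exists (S :\ v), (S :\ v :\ u :\ p); split.
  - by rewrite (cardsD1_in vS) addn1.
  - rewrite (cardsD1_in vS) (cardsD1_in uSv) (@cardsD1_in _ (S :\ v :\ u) p) ?addn3 //.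
    by rewrite !in_setD1 pv pS (nbr_neq e_irr (nbr_sym e_sym uS pN)).
  apply: (mpds_count_pendant_path e_sym e_irr vS Nv Nu pv).
  exact: (nonleaf_nbrs_uniq e_irr pd bags_small (nbr_sym e_sym uS pN) u_deg).
have Nu : nbr S u = [set v].
  apply/setP => y; rewrite inE; apply/idP/eqP => [yN | ->] //.
  by apply/eqP; move: (Nu_v y yN); rewrite negbK.
apply: Or32; exists (S :\ v :\ u); last exact: mpds_count_K2.
by rewrite (cardsD1_in vS) (cardsD1_in uSv) addn2.
Qed.

End Reduction.

(** * Growth rate *)

Section GrowthRate.
Variable alpha : R.
Hypotheses (alpha_ge1 : (1 <= alpha)%R) (alpha3 : (alpha ^ 3 = alpha ^ 2 + 1)%R).

Lemma pow_alpha_ge0 k : (0 <= alpha ^ k)%R.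
Proof. by apply: pow_le; lra. Qed.

Lemma pow_alpha_le i j : i <= j -> (alpha ^ i <= alpha ^ j)%R.
Proof. by move/leP; apply: Rle_pow. Qed.

Lemma le_INR_nat m n : m <= n -> (INR m <= INR n)%R.
Proof. by move/leP/le_INR. Qed.

(* The last two reductions are absorbed by alpha^2 >= 2 and alpha^3 = alpha^2 + 1. *)
Lemma pow_bound_of_reductions (T : finType) (f : {set T} -> nat) :
  (2 <= alpha ^ 2)%R -> f set0 <= 1 ->
  (forall S, S != set0 ->
    [\/ exists2 S' : {set T}, #|S'| < #|S| & f S <= f S',
        exists2 S' : {set T}, #|S'| + 2 = #|S| & f S <= 2 * f S'
      | exists S' S'' : {set T}, [/\ #|S'| + 1 = #|S|, #|S''| + 3 = #|S|
          & f S <= f S' + f S'']]) ->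
  forall S, (INR (f S) <= alpha ^ #|S|)%R.
Proof.
move=> alpha2 f0 reduce S; elim: {S}_.+1 {-2}S (ltnSn #|S|) => // n IH S.
rewrite ltnS => Sn; have [-> | S0] := eqVneq S set0.
  by rewrite cards0 /=; have := le_INR_nat f0; rewrite /=; lra.
case: (reduce S S0) => [[S' lt fS] | [S' eq2 fS] | [S' [S'' [eq1 eq3 fS]]]].
- apply: Rle_trans (le_INR_nat fS) _; apply: Rle_trans (IH S' _) (pow_alpha_le (ltnW lt)).
  exact: leq_trans lt Sn.
- apply: Rle_trans (le_INR_nat fS) _.
  rewrite -eq2 pow_add mult_INR (Rmult_comm (alpha ^ _)); apply: Rmult_le_compat => //.
  + exact: pos_INR.
  + exact: pos_INR.
  + by apply: IH; lia.
- apply: Rle_trans (le_INR_nat fS) _.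
  have IH1 := IH S' ltac:(lia); have IH2 := IH S'' ltac:(lia).
  have eq12 : #|S'| = #|S''| + 2 by lia.
  rewrite eq12 pow_add in IH1; rewrite plus_INR -eq3 pow_add alpha3.
  have := pow_alpha_ge0 #|S''|; nra.
Qed.

(* The base cases 3 <= m <= 5 only give g m >= 1, whence the factor alpha^5. *)
Lemma pow_le_of_recurrence (g : nat -> nat) K :
  1 <= g 3 -> (forall m, 4 <= m <= K -> g (m - 1) <= g m) ->
  (forall m, 6 <= m <= K -> g (m - 1) + g (m - 3) <= g m) ->
  forall m, 3 <= m <= K -> (alpha ^ m <= alpha ^ 5 * INR (g m))%R.
Proof.
move=> g3 g_mono g_rec.
have g_pos m : 3 <= m <= K -> (1 <= INR (g m))%R.
  elim: m => [|m IHm] mK; first by lia.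
  have [-> | m3] := eqVneq m 2; first by have := le_INR_nat g3.
  have := g_mono m.+1 ltac:(lia); rewrite subSS subn0 => /le_INR_nat.
  have := IHm ltac:(lia); lra.
elim/ltn_ind => m IH mK; case: (leqP m 5) => [m5 | m6].
  have := pow_alpha_le m5; have := g_pos m mK; have := pow_alpha_ge0 5; nra.
have IH1 := IH (m - 1) ltac:(lia) ltac:(lia).
have IH3 := IH (m - 3) ltac:(lia) ltac:(lia).
have rec := le_INR_nat (g_rec m ltac:(lia)); rewrite plus_INR in rec.
have m1 : m - 1 = m - 3 + 2 by lia.
rewrite {1}m1 pow_add in IH1.
have -> : (alpha ^ m = alpha ^ (m - 3) * alpha ^ 2 + alpha ^ (m - 3))%R.
  have m3 : m = m - 3 + 3 by lia.
  by rewrite {1}m3 pow_add alpha3; ring.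
have := Rmult_le_compat_l _ _ _ (pow_alpha_ge0 5) rec; lra.
Qed.

End GrowthRate.

(** * Paths *)

Lemma path_rel_sym n : symmetric (path_rel n).
Proof. by move=> x y; rewrite /path_rel orbC. Qed.

Lemma path_rel_irr n : irreflexive (path_rel n).
Proof. by move=> x; rewrite /path_rel; lia. Qed.

Definition path_bag n j : {set 'I_n} := [set x : 'I_n | j <= x <= j.+1].

Lemma pathwidth_le1_path n : pathwidth_le1 (path_rel n).
Proof.
exists [seq path_bag n j | j <- iota 0 n].
have nth_bag j : nth set0 [seq path_bag n j | j <- iota 0 n] j =
    if j < n then path_bag n j else set0.
  case: ifP => jn; first by rewrite (nth_map 0) ?size_iota // nth_iota.
  by rewrite nth_default // size_map size_iota leqNgt jn.
split; last first.
  (* x |-> (x == j) is injective on the bag {j, j + 1} *)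
  apply/allP => X /mapP [j _ ->]; rewrite -[2]card_bool.
  apply: (leq_card_in (fun x : 'I_n => val x == j)) => x y; rewrite !inE => hx hy /= xy.
  by apply/val_inj => /=; move: hx hy xy; lia.
split.
  move=> v; exists (path_bag n v); last by rewrite inE; lia.
  by apply/mapP; exists (nat_of_ord v); rewrite // mem_iota /=.
split.
  move=> x y xy; exists (path_bag n (minn x y)).
    by apply/mapP; exists (minn x y); rewrite // mem_iota /=; move: (ltn_ord x); lia.
  by rewrite !inE; move: xy; rewrite /path_rel; lia.
move=> v i j l /andP [ij jl]; rewrite !nth_bag.
case: (ltnP i n) => [i_n | ]; last by rewrite in_set0.
case: (ltnP l n) => [l_n | ]; last by rewrite in_set0.
by rewrite ifT ?(leq_ltn_trans jl) // !inE; lia.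
Qed.

Section PathPrefix.
Variable n : nat.
Local Notation e := (path_rel n.+1).
Local Notation o j := (@inord n j).

Definition path_prefix m : {set 'I_n.+1} := [set x : 'I_n.+1 | x < m].
Local Notation P m := (path_prefix m).

Lemma path_prefix_full : P n.+1 = setT.
Proof. by apply/setP => y; rewrite !inE ltn_ord. Qed.

Lemma in_nbr_prefix m x y :
  (y \in nbr e (P m) x) = (y < m) && ((x.+1 == y) || (y.+1 == x)).
Proof. by rewrite !inE. Qed.

Lemma eq_inord (y : 'I_n.+1) j : j <= n -> (y == o j) = (nat_of_ord y == j).
Proof. by move=> jn; rewrite -val_eqE /= inordK. Qed.

Lemma path_prefix_setD1 m : 1 <= m <= n.+1 -> P m :\ o (m - 1) = P (m - 1).
Proof. by move=> m_le; apply/setP => y; rewrite !inE eq_inord; lia. Qed.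

Lemma mpds_count_P3 : 3 <= n.+1 -> 1 <= mpds_count e (P 3).
Proof.
move=> n3; apply/card_gt0P; exists [set o 1]; rewrite inE.
apply: mpdsI.
- by apply/subsetP => x; rewrite !inE eq_inord; lia.
- move=> x; rewrite !inE eq_inord; last lia.
  move=> x3 x1; rewrite setIC cards1I in_nbr_prefix inordK; lia.
- move=> x; rewrite in_set1 eq_inord; last lia.
  move=> /eqP x1; suff : 1 < #|nbr e (P 3) x| by move=> + deg1; rewrite deg1.
  apply: (card_gt1_of (a := o 0) (b := o 2)); rewrite ?in_nbr_prefix ?eq_inord ?inordK; lia.
Qed.

(* In P m the vertex m - 1 is a leaf, followed by the path m - 2, m - 3, ... *)
Lemma mpds_count_prefix_mono m : 4 <= m <= n.+1 ->
  mpds_count e (P (m - 1)) <= mpds_count e (P m).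
Proof.
move=> m_le; rewrite -path_prefix_setD1; last lia.
apply: (mpds_count_setD1_pendant (@path_rel_sym _) (@path_rel_irr _)
  (u := o (m - 2)) (p := o (m - 3))).
- by apply/setP => y; rewrite in_nbr_prefix in_set1 !eq_inord ?inordK; lia.
- by apply/setP => y; rewrite in_nbr_prefix in_set2 !eq_inord ?inordK; lia.
- rewrite eq_inord ?inordK; lia.
have : 1 < #|nbr e (P m) (o (m - 3))|.
  by apply: (card_gt1_of (a := o (m - 2)) (b := o (m - 4)));
    rewrite ?in_nbr_prefix ?eq_inord ?inordK; lia.
by case: #|_| => [|[|]].
Qed.

Lemma mpds_count_prefix_rec m : 6 <= m <= n.+1 ->
  mpds_count e (P (m - 1)) + mpds_count e (P (m - 3)) <= mpds_count e (P m).
Proof.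
move=> m_le.
have P1 : P m :\ o (m - 1) = P (m - 1) by rewrite path_prefix_setD1 //; lia.
have P3 : P m :\ o (m - 1) :\ o (m - 2) :\ o (m - 3) = P (m - 3).
  by apply/setP => y; rewrite !inE !eq_inord; lia.
rewrite -{1}P1 -P3.
apply: (mpds_count_pendant_path_lower (@path_rel_sym _) (@path_rel_irr _)
  (u := o (m - 2)) (p := o (m - 3)) _ _ _ _ (q := o (m - 4)) (r := o (m - 5))).
- rewrite inE inordK; lia.
- by apply/setP => y; rewrite in_nbr_prefix in_set1 !eq_inord ?inordK; lia.
- by apply/setP => y; rewrite in_nbr_prefix in_set2 !eq_inord ?inordK; lia.
- rewrite eq_inord ?inordK; lia.
- by apply/setP => y; rewrite in_nbr_prefix in_set2 !eq_inord ?inordK; lia.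
- rewrite eq_inord ?inordK; lia.
- by rewrite P3; apply/setP => y; rewrite in_nbr_prefix in_set1 !eq_inord ?inordK; lia.
rewrite P3; apply: (card_gt1_of (a := o (m - 6)) (b := o (m - 4)));
  rewrite ?in_nbr_prefix ?eq_inord ?inordK; lia.
Qed.

End PathPrefix.

Lemma num_1min_pds_path n :
  num_1min_pds (path_rel n.+1) = mpds_count (path_rel n.+1) (path_prefix n n.+1).
Proof. by rewrite (num_1min_pdsE (@path_rel_sym _) (@path_rel_irr _)) path_prefix_full. Qed.

Lemma num_1min_pds_le_pow (alpha : R) (T : finType) (e : rel T) :
  (1 <= alpha)%R -> (alpha ^ 3 = alpha ^ 2 + 1)%R -> (2 <= alpha ^ 2)%R ->
  symmetric e -> irreflexive e -> pathwidth_le1 e ->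
  (INR (num_1min_pds e) <= alpha ^ #|T|)%R.
Proof.
move=> alpha_ge1 alpha3 alpha2 e_sym e_irr [bags [pd small]].
have := pow_bound_of_reductions alpha_ge1 alpha3 alpha2 (mpds_count_set0 e)
  (mpds_count_reduction e_sym e_irr pd small) setT.
by rewrite cardsT num_1min_pdsE.
Qed.

Lemma pow_le_num_1min_pds_path (alpha : R) n :
  (1 <= alpha)%R -> (alpha ^ 3 = alpha ^ 2 + 1)%R -> 3 <= n ->
  (alpha ^ n <= alpha ^ 5 * INR (num_1min_pds (path_rel n)))%R.
Proof.
case: n => // n alpha_ge1 alpha3 n3; rewrite num_1min_pds_path.
apply: (pow_le_of_recurrence alpha_ge1 alpha3 (mpds_count_P3 n3)
  (@mpds_count_prefix_mono n) (@mpds_count_prefix_rec n)).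
by rewrite n3 leqnn.
Qed.

Theorem mainTheorem8 (alpha : R) :
  (1 < alpha < 2)%R -> (alpha ^ 3 - alpha ^ 2 - 1 = 0)%R ->
  (forall (T : finType) (e : rel T),
      symmetric e -> irreflexive e -> pathwidth_le1 e ->
      (INR (num_1min_pds e) <= alpha ^ #|T|)%R) /\
  (exists c1 c2 : R, (0 < c1)%R /\ (0 < c2)%R /\
     exists N : nat, forall n : nat, (leq N n) ->
       (c1 * alpha ^ n <= INR (num_1min_pds (path_rel n)) <= c2 * alpha ^ n)%R).
Proof.
move=> alpha_bounds alpha_root.
have alpha_ge1 : (1 <= alpha)%R by lra.
have alpha3 : (alpha ^ 3 = alpha ^ 2 + 1)%R by lra.
have alpha2 : (2 <= alpha ^ 2)%R by move: alpha_bounds alpha_root => /= [? ?] ?; nra.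
split; first by move=> T e; apply: num_1min_pds_le_pow.
have alpha5 : (0 < alpha ^ 5)%R by apply: pow_lt; lra.
exists (/ alpha ^ 5)%R, 1%R; split; first exact: Rinv_0_lt_compat.
split; first lra.
exists 3 => n n3; split.
  apply: (Rmult_le_reg_l (alpha ^ 5)) => //; rewrite -Rmult_assoc Rinv_r; last lra.
  by rewrite Rmult_1_l; apply: pow_le_num_1min_pds_path.
have := num_1min_pds_le_pow alpha_ge1 alpha3 alpha2 (@path_rel_sym n)
  (@path_rel_irr n) (pathwidth_le1_path n).
by rewrite card_ord Rmult_1_l.
Qed.
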